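(* Let $f$ be a $C^1$ diffeomorphism of $M=\mathbb{R}^d/\mathbb{Z}^d$ and $x\in M$. If $\Gamma_{o(x)}$ is a bijection of $\mathcal{N}$, then $x$ is u-hyperbolic.
   Context: Tangent spaces identified with $\mathbb{R}^d$. $o(x)=(f^k(x))_{k\in\mathbb{Z}}$, $(\Gamma_{\mathbf{x}}\eta)_k=\eta_k-Df(x_{k-1})\eta_{k-1}$. $\mathcal{N}$ is the space of sequences $(\eta_k)_{k\in\mathbb{Z}}$ in $\mathbb{R}^d$ with $\limsup_{|k|\to\infty}\frac1{|k|}\log|\eta_k|\le0$. A point $x$ is u-hyperbolic if there exist subspaces $E^u(x),E^s(x)$ spanning $T_xM$ such that $\limsup_{k\to\infty}\frac1k\log|Df^{-k}(x)\eta^s|>0$ for all nonzero $\eta^s\in E^s(x)$ and $\limsup_{k\to\infty}\frac1k\log|Df^k(x)\eta^u|>0$ for all nonzero $\eta^u\in E^u(x)$. *)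

From Stdlib Require Import Reals ZArith.
Open Scope R_scope.

(* Vectors of R^d are represented as nat -> R; only coordinates i < d matter.
   Matrices are nat -> nat -> R; only entries (i,j) with i,j < d matter. *)
Definition vec := nat -> R.
Definition mat := nat -> nat -> R.

Fixpoint vsum (n : nat) (f : nat -> R) : R :=
  match n with O => 0 | S m => vsum m f + f m end.

(* sup-norm on R^d (all norms on R^d are equivalent; exponents are norm-independent) *)
Fixpoint vnorm (n : nat) (v : vec) : R :=
  match n with O => 0 | S m => Rmax (vnorm m v) (Rabs (v m)) end.

Definition vadd (u v : vec) : vec := fun i => u i + v i.
Definition vsub (u v : vec) : vec := fun i => u i - v i.
Definition vscale (a : R) (v : vec) : vec := fun i => a * v i.
Definition vzero : vec := fun _ => 0.

Definition mapp (d : nat) (A : mat) (v : vec) : vec :=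
  fun i => vsum d (fun j => A i j * v j).

Definition veq (d : nat) (u v : vec) : Prop := forall i, (i < d)%nat -> u i = v i.

Definition vnonzero (d : nat) (v : vec) : Prop := exists i, (i < d)%nat /\ v i <> 0.

(* x and y represent the same point of the torus R^d / Z^d *)
Definition congZ (d : nat) (x y : vec) : Prop :=
  exists m : nat -> Z, forall i, (i < d)%nat -> x i = y i + IZR (m i).

Definition has_deriv (d : nat) (H : vec -> vec) (x : vec) (L : mat) : Prop :=
  forall eps, eps > 0 -> exists delta, delta > 0 /\
    forall h, vnorm d h < delta ->
      vnorm d (vsub (vsub (H (vadd x h)) (H x)) (mapp d L h)) <= eps * vnorm d h.

Definition is_C1 (d : nat) (H : vec -> vec) (DH : vec -> mat) : Prop :=
  (forall x, has_deriv d H x (DH x)) /\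
  (forall x eps, eps > 0 -> exists delta, delta > 0 /\
     forall y, vnorm d (vsub y x) < delta ->
       forall i j, (i < d)%nat -> (j < d)%nat -> Rabs (DH y i j - DH x i j) < eps).

(* H : R^d -> R^d is a lift of a well-defined self-map of M = R^d/Z^d *)
Definition torus_lift (d : nat) (H : vec -> vec) : Prop :=
  forall x y, congZ d x y -> congZ d (H x) (H y).

(* f (lifted by F, with derivative DF) is a C^1 diffeomorphism of M = R^d/Z^d,
   with inverse f^{-1} lifted by G (derivative DG). *)
Definition C1_diffeo_torus (d : nat) (F G : vec -> vec) (DF DG : vec -> mat) : Prop :=
  torus_lift d F /\ torus_lift d G /\
  is_C1 d F DF /\ is_C1 d G DG /\
  (forall x, congZ d (G (F x)) x) /\ (forall x, congZ d (F (G x)) x).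

Definition orb (F G : vec -> vec) (x : vec) (k : Z) : vec :=
  match k with
  | Z0 => x
  | Zpos p => Nat.iter (Pos.to_nat p) F x
  | Zneg p => Nat.iter (Pos.to_nat p) G x
  end.

(* Df^k(x) eta = Df(x_{k-1}) ... Df(x_0) eta   (chain rule), k >= 0 *)
Fixpoint Dfk (d : nat) (F G : vec -> vec) (DF : vec -> mat) (x : vec) (k : nat) (eta : vec) : vec :=
  match k with
  | O => eta
  | S n => mapp d (DF (orb F G x (Z.of_nat n))) (Dfk d F G DF x n eta)
  end.

(* Df^{-k}(x) eta = D(f^{-1})(x_{-(k-1)}) ... D(f^{-1})(x_0) eta, k >= 0 *)
Fixpoint Dfmk (d : nat) (F G : vec -> vec) (DG : vec -> mat) (x : vec) (k : nat) (eta : vec) : vec :=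
  match k with
  | O => eta
  | S n => mapp d (DG (orb F G x (- Z.of_nat n)%Z)) (Dfmk d F G DG x n eta)
  end.

(* limsup_{k -> oo} (1/k) log |v_k| > 0 *)
Definition pos_upper_exponent (d : nat) (v : nat -> vec) : Prop :=
  exists c, c > 0 /\ forall K : nat, exists k : nat, (K <= k)%nat /\ (0 < k)%nat /\
    vnorm d (v k) > exp (c * INR k).

Definition zseq := Z -> vec.

(* eta in N : limsup_{|k| -> oo} (1/|k|) log |eta_k| <= 0 *)
Definition inN (d : nat) (eta : zseq) : Prop :=
  forall eps, eps > 0 -> exists K : nat, forall k : Z,
    (Z.of_nat K <= Z.abs k)%Z -> vnorm d (eta k) <= exp (eps * IZR (Z.abs k)).

Definition zseq_eq (d : nat) (a b : zseq) : Prop := forall k, veq d (a k) (b k).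

Definition Gamma (d : nat) (F G : vec -> vec) (DF : vec -> mat) (x : vec) (eta : zseq) : zseq :=
  fun k => vsub (eta k) (mapp d (DF (orb F G x (k - 1)%Z)) (eta (k - 1)%Z)).

Definition Gamma_bijection_N (d : nat) (F G : vec -> vec) (DF : vec -> mat) (x : vec) : Prop :=
  (forall eta, inN d eta -> inN d (Gamma d F G DF x eta)) /\
  (forall zeta, inN d zeta -> exists eta, inN d eta /\ zseq_eq d (Gamma d F G DF x eta) zeta) /\
  (forall e1 e2, inN d e1 -> inN d e2 ->
     zseq_eq d (Gamma d F G DF x e1) (Gamma d F G DF x e2) -> zseq_eq d e1 e2).

Definition is_subspace (d : nat) (E : vec -> Prop) : Prop :=
  E vzero /\ (forall u v, E u -> E v -> E (vadd u v)) /\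
  (forall a u, E u -> E (vscale a u)) /\
  (forall u v, veq d u v -> E u -> E v).

Definition u_hyperbolic (d : nat) (F G : vec -> vec) (DF DG : vec -> mat) (x : vec) : Prop :=
  exists Eu Es : vec -> Prop,
    is_subspace d Eu /\ is_subspace d Es /\
    (forall v, exists u s, Eu u /\ Es s /\ veq d v (vadd u s)) /\
    (forall eta, Es eta -> vnonzero d eta ->
       pos_upper_exponent d (fun k => Dfmk d F G DG x k eta)) /\
    (forall eta, Eu eta -> vnonzero d eta ->
       pos_upper_exponent d (fun k => Dfk d F G DF x k eta)).

From Stdlib Require Import Reals ZArith Lra Lia Classical FunctionalExtensionality.
Open Scope R_scope.

(* Write A_k = Df(x_k).  We take
     E^s = { v | the forward iterates Df^n(x) v grow subexponentially },
     E^u = { v | v = A_{-1} xi_0 for a subexponential backward history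
                 xi_n = A_{-n-2} xi_{n+1} }.  If v lies in both, gluing its forward orbit to
   its backward history gives a sequence of N in the kernel of Gamma, so
   injectivity forces v = 0.  Surjectivity, applied to the Dirac sequence
   concentrated at time 0, writes any vector as a sum u + s with u in E^u and
   s in E^s.  A nonzero u in E^u therefore cannot have subexponential forward
   growth, and a nonzero s in E^s cannot have subexponential backward growth,
   because D(f^{-1})(x_{-n}) inverts A_{-n-1}: this is the chain rule applied
   to f o f^{-1} = id on the torus, the only place where the diffeomorphism
   hypothesis is used. *)

Lemma vnorm_nonneg n v : 0 <= vnorm n v.
Proof.
  induction n; simpl; [lra|].
  eapply Rle_trans; [exact IHn | apply Rmax_l].
Qed.

Lemma coord_le n v i : (i < n)%nat -> Rabs (v i) <= vnorm n v.
Proof.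
  induction n; intros Hi; [lia|]. simpl.
  destruct (Nat.eq_dec i n) as [->|Hne]; [apply Rmax_r|].
  eapply Rle_trans; [apply IHn; lia | apply Rmax_l].
Qed.

Lemma vnorm_le n v B :
  0 <= B -> (forall i, (i < n)%nat -> Rabs (v i) <= B) -> vnorm n v <= B.
Proof.
  induction n; intros HB H; simpl; [lra|].
  apply Rmax_lub; [apply IHn; auto | apply H; lia].
Qed.

Lemma vnorm_ext n u v : veq n u v -> vnorm n u = vnorm n v.
Proof.
  induction n; intros H; simpl; auto.
  rewrite IHn by (intros i Hi; apply H; lia). rewrite (H n) by lia. reflexivity.
Qed.

Lemma vnorm_tri n w u v :
  (forall i, (i < n)%nat -> w i = u i + v i) -> vnorm n w <= vnorm n u + vnorm n v.
Proof.
  intros H. apply vnorm_le.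
  - pose proof (vnorm_nonneg n u); pose proof (vnorm_nonneg n v); lra.
  - intros i Hi. rewrite H by auto. eapply Rle_trans; [apply Rabs_triang|].
    pose proof (coord_le n u i Hi); pose proof (coord_le n v i Hi); lra.
Qed.

Lemma vnorm_scale n a v : vnorm n (vscale a v) = Rabs a * vnorm n v.
Proof.
  induction n; simpl; [ring|]. rewrite IHn. unfold vscale. rewrite Rabs_mult.
  rewrite RmaxRmult; auto. apply Rabs_pos.
Qed.

Lemma vnorm_vzero n : vnorm n vzero = 0.
Proof.
  apply Rle_antisym; [|apply vnorm_nonneg].
  apply vnorm_le; [lra|]. intros; unfold vzero; rewrite Rabs_R0; lra.
Qed.

Lemma vnorm_eq0 n v : vnorm n v <= 0 -> veq n v vzero.
Proof.
  intros H i Hi. pose proof (coord_le n v i Hi). unfold vzero.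
  destruct (Req_dec (v i) 0) as [|Hne]; auto. pose proof (Rabs_pos_lt _ Hne). lra.
Qed.

Lemma vsum_ext n f g : (forall j, (j < n)%nat -> f j = g j) -> vsum n f = vsum n g.
Proof.
  induction n; intros H; simpl; auto.
  rewrite IHn by (intros; apply H; lia). rewrite H by lia. reflexivity.
Qed.

Lemma vsum_add n f g : vsum n (fun j => f j + g j) = vsum n f + vsum n g.
Proof. induction n; simpl; [ring|]. rewrite IHn; ring. Qed.

Lemma vsum_scal n a f : vsum n (fun j => a * f j) = a * vsum n f.
Proof. induction n; simpl; [ring|]. rewrite IHn; ring. Qed.

Lemma vsum_abs n f : Rabs (vsum n f) <= vsum n (fun j => Rabs (f j)).
Proof.
  induction n; simpl; [rewrite Rabs_R0; lra|].
  eapply Rle_trans; [apply Rabs_triang|]. lra.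
Qed.

Lemma vsum_le n f g : (forall j, (j < n)%nat -> f j <= g j) -> vsum n f <= vsum n g.
Proof.
  induction n; intros H; simpl; [lra|].
  pose proof (H n ltac:(lia)). pose proof (IHn ltac:(intros; apply H; lia)). lra.
Qed.

Lemma vsum_nonneg n f : (forall j, (j < n)%nat -> 0 <= f j) -> 0 <= vsum n f.
Proof.
  intros H. replace 0 with (vsum n (fun _ => 0)).
  - apply vsum_le. exact H.
  - induction n; simpl; [reflexivity|]. rewrite IHn by (intros; apply H; lia). ring.
Qed.

Lemma vsum_term n f i :
  (forall j, (j < n)%nat -> 0 <= f j) -> (i < n)%nat -> f i <= vsum n f.
Proof.
  induction n; intros H Hi; [lia|]. simpl.
  pose proof (vsum_nonneg n f ltac:(intros; apply H; lia)).
  destruct (Nat.eq_dec i n) as [->|Hne]; [lra|].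
  pose proof (IHn ltac:(intros; apply H; lia) ltac:(lia)). pose proof (H n ltac:(lia)). lra.
Qed.

Lemma mapp_add d A u v i : mapp d A (vadd u v) i = mapp d A u i + mapp d A v i.
Proof. unfold mapp, vadd. rewrite <- vsum_add. apply vsum_ext; intros; ring. Qed.

Lemma mapp_scale d A a u i : mapp d A (vscale a u) i = a * mapp d A u i.
Proof. unfold mapp, vscale. rewrite <- vsum_scal. apply vsum_ext; intros; ring. Qed.

Lemma mapp_ext d A u v i : veq d u v -> mapp d A u i = mapp d A v i.
Proof. intros H. unfold mapp. apply vsum_ext; intros; rewrite H; auto. Qed.

Lemma mapp_zero d A i : mapp d A vzero i = 0.
Proof. unfold mapp, vzero. induction d; simpl; [reflexivity|]. rewrite IHd; ring. Qed.

(* The entrywise l^1 norm of a matrix bounds its operator norm for the sup-norm. *)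
Definition mnorm (d : nat) (A : mat) : R :=
  vsum d (fun i => vsum d (fun j => Rabs (A i j))).

Lemma mnorm_nonneg d A : 0 <= mnorm d A.
Proof. apply vsum_nonneg; intros; apply vsum_nonneg; intros; apply Rabs_pos. Qed.

Lemma mapp_bound d A h : vnorm d (mapp d A h) <= mnorm d A * vnorm d h.
Proof.
  apply vnorm_le.
  { pose proof (mnorm_nonneg d A); pose proof (vnorm_nonneg d h); nra. }
  intros i Hi. unfold mapp. eapply Rle_trans; [apply vsum_abs|].
  apply Rle_trans with (vsum d (fun j => Rabs (A i j)) * vnorm d h).
  - rewrite Rmult_comm, <- vsum_scal. apply vsum_le. intros j Hj. rewrite Rabs_mult.
    pose proof (coord_le d h j Hj). pose proof (Rabs_pos (A i j)). nra.
  - apply Rmult_le_compat_r; [apply vnorm_nonneg|].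
    apply (vsum_term d (fun i => vsum d (fun j => Rabs (A i j)))); auto.
    intros; apply vsum_nonneg; intros; apply Rabs_pos.
Qed.

(* Subexponential sequences: |s_n| <= C e^{eps n} eventually, for every eps > 0.
   One-sided halves of sequences in N are exactly of this kind. *)

Definition subexp (d : nat) (s : nat -> vec) : Prop :=
  forall eps, eps > 0 -> exists K C, forall n, (K <= n)%nat ->
    vnorm d (s n) <= C * exp (eps * INR n).

Lemma exp_le_mono a b : a <= b -> exp a <= exp b.
Proof. intros [H|H]; [left; apply exp_increasing; auto | subst; lra]. Qed.

Lemma subexp_exp d s : subexp d s -> forall eps, eps > 0 -> exists K, forall n,
  (K <= n)%nat -> vnorm d (s n) <= exp (eps * INR n).
Proof.
  intros H eps He. destruct (H (eps / 2) ltac:(lra)) as [K [C HK]].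
  destruct (INR_archimed (eps / 2) (Rabs C) ltac:(lra)) as [N HN].
  exists (max K N). intros n Hn. eapply Rle_trans; [apply HK; lia|].
  assert (HnN : INR N <= INR n) by (apply le_INR; lia).
  set (y := eps / 2 * INR n).
  assert (Hy : Rabs C < y) by (unfold y; nra).
  assert (Hy0 : y <> 0) by (pose proof (Rabs_pos C); lra).
  pose proof (exp_ineq1 y Hy0). pose proof (exp_pos y). pose proof (Rle_abs C).
  replace (eps * INR n) with (y + y) by (unfold y; field).
  rewrite exp_plus. apply Rmult_le_compat_r; lra.
Qed.

Lemma subexp_ext d s t : (forall n, veq d (s n) (t n)) -> subexp d t -> subexp d s.
Proof.
  intros H Ht eps He. destruct (Ht eps He) as [K [C HK]]. exists K, C. intros n Hn.
  rewrite (vnorm_ext d (s n) (t n)); auto.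
Qed.

Lemma subexp_add d s t : subexp d s -> subexp d t -> subexp d (fun n => vadd (s n) (t n)).
Proof.
  intros Hs Ht eps He.
  destruct (Hs eps He) as [K1 [C1 H1]]. destruct (Ht eps He) as [K2 [C2 H2]].
  exists (max K1 K2), (C1 + C2). intros n Hn.
  eapply Rle_trans; [apply (vnorm_tri d _ (s n) (t n)); reflexivity|].
  specialize (H1 n ltac:(lia)); specialize (H2 n ltac:(lia)). lra.
Qed.

Lemma subexp_scale d a s : subexp d s -> subexp d (fun n => vscale a (s n)).
Proof.
  intros Hs eps He. destruct (Hs eps He) as [K [C H1]].
  exists K, (Rabs a * C). intros n Hn. rewrite vnorm_scale, Rmult_assoc.
  apply Rmult_le_compat_l; [apply Rabs_pos | auto].
Qed.

Lemma subexp_zero d : subexp d (fun _ => vzero).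
Proof. intros eps He. exists 0%nat, 0. intros. rewrite vnorm_vzero. lra. Qed.

Lemma subexp_shift d s : subexp d s -> subexp d (fun n => s (S n)).
Proof.
  intros H eps He. destruct (H eps He) as [K [C HK]]. exists K, (C * exp eps).
  intros n Hn. eapply Rle_trans; [apply HK; lia|]. rewrite S_INR. right.
  rewrite Rmult_assoc, <- exp_plus. f_equal. f_equal. ring.
Qed.

Lemma not_pos_exponent_subexp d s : ~ pos_upper_exponent d s -> subexp d s.
Proof.
  intros H eps He.
  destruct (classic (exists K, forall k, (K <= k)%nat -> (0 < k)%nat ->
                       vnorm d (s k) <= exp (eps * INR k))) as [[K HK]|Hno].
  - exists (max K 1), 1. intros n Hn. rewrite Rmult_1_l. apply HK; lia.
  - exfalso. apply H. exists eps. split; auto. intros K. apply NNPP. intros Hk.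
    apply Hno. exists K. intros k Hk1 Hk2. apply Rnot_lt_le. intros Hc.
    apply Hk. exists k. auto.
Qed.

Lemma Z_cases (k : Z) : (exists m, k = Z.of_nat m) \/ (exists n, k = (- Z.of_nat (S n))%Z).
Proof.
  destruct (Z_lt_le_dec k 0).
  - right. exists (Z.to_nat (- k) - 1)%nat. lia.
  - left. exists (Z.to_nat k). lia.
Qed.

Lemma inN_zero d : inN d (fun _ => vzero).
Proof. intros eps He. exists 0%nat. intros. rewrite vnorm_vzero. left; apply exp_pos. Qed.

Lemma inN_forward d (e : zseq) : inN d e -> subexp d (fun n => e (Z.of_nat n)).
Proof.
  intros H eps He. destruct (H eps He) as [K HK]. exists K, 1. intros n Hn.
  rewrite Rmult_1_l, INR_IZR_INZ.
  replace (Z.of_nat n) with (Z.abs (Z.of_nat n)) at 2 by lia. apply HK. lia.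
Qed.

Lemma inN_backward d (e : zseq) : inN d e -> subexp d (fun n => e (- Z.of_nat (S n))%Z).
Proof.
  intros H eps He. destruct (H eps He) as [K HK]. exists K, (exp eps). intros n Hn.
  rewrite <- exp_plus.
  replace (eps + eps * INR n) with (eps * IZR (Z.abs (- Z.of_nat (S n)))); [apply HK; lia|].
  replace (Z.abs (- Z.of_nat (S n))) with (Z.of_nat (S n)) by lia.
  rewrite <- INR_IZR_INZ, S_INR. ring.
Qed.

Definition glue (fwd bwd : nat -> vec) : zseq :=
  fun k => if (0 <=? k)%Z then fwd (Z.to_nat k) else bwd (Z.to_nat (- k) - 1)%nat.

Lemma glue_nonneg fwd bwd m : glue fwd bwd (Z.of_nat m) = fwd m.
Proof. unfold glue. rewrite (proj2 (Z.leb_le _ _)) by lia. rewrite Nat2Z.id. reflexivity. Qed.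

Lemma glue_neg fwd bwd n : glue fwd bwd (- Z.of_nat (S n))%Z = bwd n.
Proof. unfold glue. rewrite (proj2 (Z.leb_gt _ _)) by lia. f_equal. lia. Qed.

Lemma inN_glue d fwd bwd : subexp d fwd -> subexp d bwd -> inN d (glue fwd bwd).
Proof.
  intros Hf Hb eps He.
  destruct (subexp_exp _ _ Hf eps He) as [K1 HK1].
  destruct (subexp_exp _ _ Hb eps He) as [K2 HK2].
  exists (max K1 (S K2)). intros k Hk.
  destruct (Z_cases k) as [[m ->]|[n ->]].
  - rewrite glue_nonneg. replace (Z.abs (Z.of_nat m)) with (Z.of_nat m) by lia.
    rewrite <- INR_IZR_INZ. apply HK1. lia.
  - rewrite glue_neg. eapply Rle_trans; [apply HK2; lia|]. apply exp_le_mono.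
    replace (Z.abs (- Z.of_nat (S n))) with (Z.of_nat (S n)) by lia.
    rewrite <- INR_IZR_INZ, S_INR. lra.
Qed.

Lemma deriv_lipschitz d H z L : has_deriv d H z L -> exists delta, delta > 0 /\
  forall h, vnorm d h < delta ->
    vnorm d (vsub (H (vadd z h)) (H z)) <= (mnorm d L + 1) * vnorm d h.
Proof.
  intros HD. destruct (HD 1 ltac:(lra)) as [delta [Hd Hh]]. exists delta; split; auto.
  intros h Hlt. eapply Rle_trans.
  - apply (vnorm_tri d _ (vsub (vsub (H (vadd z h)) (H z)) (mapp d L h)) (mapp d L h)).
    intros; unfold vsub; ring.
  - specialize (Hh h Hlt). pose proof (mapp_bound d L h). lra.
Qed.

Lemma chain_rule d F G A B y :
  has_deriv d G y B -> has_deriv d F (G y) A ->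
  forall eta, eta > 0 -> exists delta, delta > 0 /\ forall h, vnorm d h < delta ->
    vnorm d (vsub (vsub (F (G (vadd y h))) (F (G y))) (mapp d A (mapp d B h)))
      <= eta * vnorm d h.
Proof.
  intros HG HF eta Heta.
  set (CA := mnorm d A). set (CB := mnorm d B).
  assert (HCA : 0 <= CA) by apply mnorm_nonneg.
  assert (HCB : 0 <= CB) by apply mnorm_nonneg.
  set (e1 := eta / (2 * (CB + 1))). set (e2 := eta / (2 * (CA + 1))).
  assert (He1 : (CB + 1) * e1 = eta / 2) by (unfold e1; field; lra).
  assert (He2 : (CA + 1) * e2 = eta / 2) by (unfold e2; field; lra).
  destruct (HF e1 ltac:(nra)) as [dF [HdF HFh]].
  destruct (HG e2 ltac:(nra)) as [dG [HdG HGh]].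
  destruct (deriv_lipschitz _ _ _ _ HG) as [dL [HdL HLh]]. fold CB in HLh.
  exists (Rmin (Rmin dG dL) (dF / (CB + 1))). split.
  { repeat apply Rmin_pos; try lra. apply Rdiv_lt_0_compat; lra. }
  intros h Hh.
  pose proof (Rmin_l (Rmin dG dL) (dF / (CB + 1))).
  pose proof (Rmin_r (Rmin dG dL) (dF / (CB + 1))).
  pose proof (Rmin_l dG dL). pose proof (Rmin_r dG dL).
  pose proof (vnorm_nonneg d h) as Hh0.
  set (g := vsub (G (vadd y h)) (G y)).
  assert (Hg : vnorm d g <= (CB + 1) * vnorm d h) by (apply HLh; lra).
  assert (HgF : vnorm d g < dF).
  { apply Rle_lt_trans with ((CB + 1) * vnorm d h); auto.
    replace dF with ((CB + 1) * (dF / (CB + 1))) by (field; lra).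
    apply Rmult_lt_compat_l; lra. }
  assert (Eg : vadd (G y) g = G (vadd y h)).
  { apply functional_extensionality; intro j. unfold g, vadd, vsub. ring. }
  set (r := vsub g (mapp d B h)).
  assert (Hr : vnorm d r <= e2 * vnorm d h) by (apply HGh; lra).
  assert (Hf := HFh g HgF). rewrite Eg in Hf.
  assert (Hsplit : forall j, mapp d A g j = mapp d A (mapp d B h) j + mapp d A r j).
  { intros j. rewrite <- mapp_add. apply mapp_ext. intros k _. unfold vadd, r, vsub. ring. }
  eapply Rle_trans.
  { apply (vnorm_tri d _ (vsub (vsub (F (G (vadd y h))) (F (G y))) (mapp d A g))
                         (mapp d A r)).
    intros j _. unfold vsub at 1 3. rewrite Hsplit. unfold vsub. ring. }
  pose proof (mapp_bound d A r) as Hb. fold CA in Hb.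
  assert (T1 : e1 * vnorm d g <= eta / 2 * vnorm d h).
  { rewrite <- He1, (Rmult_comm (CB + 1) e1), Rmult_assoc.
    apply Rmult_le_compat_l; [nra | exact Hg]. }
  assert (T2 : CA * vnorm d r <= eta / 2 * vnorm d h).
  { apply Rle_trans with (CA * (e2 * vnorm d h)); [apply Rmult_le_compat_l; lra|].
    rewrite <- Rmult_assoc. apply Rmult_le_compat_r; [exact Hh0 | nra]. }
  lra.
Qed.

Lemma IZR_small z : Rabs (IZR z) < 1 -> z = 0%Z.
Proof.
  intros H. apply Rabs_def2 in H. destruct H as [H1 H2].
  assert (H3 : IZR (-1) < IZR z) by (change (IZR (-1)) with (- IZR 1); lra).
  apply lt_IZR in H3. apply lt_IZR in H1. lia.
Qed.

(* Two pairs of congruent points mod Z^d with small displacements have the same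
   displacement: the integer translations involved must agree. *)
Lemma congZ_small_shift d a b u v :
  congZ d a u -> congZ d b v ->
  vnorm d (vsub a b) < / 2 -> vnorm d (vsub u v) < / 2 ->
  forall i, (i < d)%nat -> a i - b i = u i - v i.
Proof.
  intros [m Hm] [n Hn] Hab Huv i Hi.
  assert (Ci : Rabs (a i - b i) < / 2).
  { pose proof (coord_le d (vsub a b) i Hi) as C. unfold vsub at 1 in C. lra. }
  assert (Di : Rabs (u i - v i) < / 2).
  { pose proof (coord_le d (vsub u v) i Hi) as C. unfold vsub at 1 in C. lra. }
  assert (Hmn : (m i - n i)%Z = 0%Z).
  { apply IZR_small. rewrite minus_IZR.
    replace (IZR (m i) - IZR (n i)) with ((a i - b i) + - (u i - v i))
      by (rewrite Hm, Hn by auto; ring).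
    eapply Rle_lt_trans; [apply Rabs_triang|]. rewrite Rabs_Ropp. lra. }
  rewrite Hm, Hn by auto.
  assert (IZR (m i) = IZR (n i)) by (f_equal; lia). lra.
Qed.

Lemma inverse_derivative_near_identity d F G A B y :
  has_deriv d G y B -> has_deriv d F (G y) A -> (forall z, congZ d (F (G z)) z) ->
  forall eta, eta > 0 -> exists delta, delta > 0 /\ forall h, vnorm d h < delta ->
    vnorm d (vsub h (mapp d A (mapp d B h))) <= eta * vnorm d h.
Proof.
  intros HG HF HFG eta Heta.
  destruct (chain_rule d F G A B y HG HF eta Heta) as [d1 [Hd1 Hch]].
  set (CAB := mnorm d A * mnorm d B).
  assert (HCAB : 0 <= CAB) by (apply Rmult_le_pos; apply mnorm_nonneg).
  set (rho := / (2 * (eta + CAB + 1))).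
  assert (Hrho : (eta + CAB + 1) * rho = / 2) by (unfold rho; field; lra).
  exists (Rmin d1 (Rmin (/ 2) rho)). split.
  { repeat apply Rmin_pos; try lra. unfold rho. apply Rinv_0_lt_compat. lra. }
  intros h Hh.
  pose proof (Rmin_l d1 (Rmin (/ 2) rho)). pose proof (Rmin_r d1 (Rmin (/ 2) rho)).
  pose proof (Rmin_l (/ 2) rho). pose proof (Rmin_r (/ 2) rho).
  pose proof (vnorm_nonneg d h) as Hh0.
  set (q := vsub (F (G (vadd y h))) (F (G y))).
  assert (Hq : vnorm d (vsub q (mapp d A (mapp d B h))) <= eta * vnorm d h)
    by (apply Hch; lra).
  assert (HABh : vnorm d (mapp d A (mapp d B h)) <= CAB * vnorm d h).
  { eapply Rle_trans; [apply mapp_bound|]. unfold CAB. rewrite Rmult_assoc.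
    apply Rmult_le_compat_l; [apply mnorm_nonneg | apply mapp_bound]. }
  assert (Hqsmall : vnorm d q < / 2).
  { eapply Rle_lt_trans.
    { apply (vnorm_tri d q (vsub q (mapp d A (mapp d B h))) (mapp d A (mapp d B h))).
      intros; unfold vsub; ring. }
    rewrite <- Hrho.
    apply Rle_lt_trans with ((eta + CAB + 1) * vnorm d h); [nra|].
    apply Rmult_lt_compat_l; lra. }
  assert (Hqh : veq d q h).
  { assert (Hshift : vnorm d (vsub (vadd y h) y) < / 2).
    { rewrite (vnorm_ext d _ h); [lra|]. intros j _. unfold vsub, vadd. ring. }
    intros i Hi. unfold q, vsub.
    rewrite (congZ_small_shift d _ _ (vadd y h) y (HFG _) (HFG _) Hqsmall Hshift i Hi).
    unfold vadd. ring. }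
  rewrite (vnorm_ext d _ (vsub q (mapp d A (mapp d B h)))); auto.
  intros i Hi. unfold vsub. rewrite (Hqh i Hi). reflexivity.
Qed.

Lemma le_all_multiples a b : 0 <= b -> (forall eta, eta > 0 -> a <= eta * b) -> a <= 0.
Proof.
  intros Hb H. apply Rnot_lt_le. intros Ha.
  specialize (H (a / (2 * (b + 1))) ltac:(apply Rdiv_lt_0_compat; lra)).
  assert (a * (2 * (b + 1)) <= a * b).
  { apply Rle_trans with (a / (2 * (b + 1)) * b * (2 * (b + 1))).
    - apply Rmult_le_compat_r; lra.
    - right; field; lra. }
  nra.
Qed.

Lemma near_identity_homogeneous d (M : vec -> vec) :
  (forall t w i, (i < d)%nat -> M (vscale t w) i = t * M w i) ->
  (forall eta, eta > 0 -> exists delta, delta > 0 /\ forall h,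
     vnorm d h < delta -> vnorm d (vsub h (M h)) <= eta * vnorm d h) ->
  forall w i, (i < d)%nat -> M w i = w i.
Proof.
  intros Hhom Hnear w.
  pose proof (vnorm_nonneg d w) as Hw0.
  assert (Hsmall : forall eta, eta > 0 -> vnorm d (vsub w (M w)) <= eta * vnorm d w).
  { intros eta Heta. destruct (Hnear eta Heta) as [delta [Hdelta Hd]].
    set (t := delta / (2 * (vnorm d w + 1))).
    assert (Ht : t > 0) by (unfold t; apply Rdiv_lt_0_compat; lra).
    assert (Hsc : vnorm d (vscale t w) = t * vnorm d w)
      by (rewrite vnorm_scale, Rabs_right; lra).
    assert (Hlt : vnorm d (vscale t w) < delta).
    { rewrite Hsc. unfold t.
      replace (delta / (2 * (vnorm d w + 1)) * vnorm d w)
        with (delta / 2 * (vnorm d w / (vnorm d w + 1))) by (field; lra).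
      assert (vnorm d w / (vnorm d w + 1) < 1).
      { apply Rmult_lt_reg_r with (vnorm d w + 1); [lra|].
        unfold Rdiv. rewrite Rmult_assoc, Rinv_l; lra. }
      nra. }
    specialize (Hd _ Hlt).
    rewrite (vnorm_ext d _ (vscale t (vsub w (M w)))) in Hd.
    - rewrite vnorm_scale, Rabs_right, Hsc in Hd by lra.
      apply Rmult_le_reg_l with t; auto. lra.
    - intros j Hj. unfold vsub. rewrite Hhom by auto. unfold vscale. ring. }
  intros i Hi.
  pose proof (vnorm_eq0 d _ (le_all_multiples _ _ Hw0 Hsmall) i Hi) as Hz.
  unfold vsub, vzero in Hz. lra.
Qed.

Lemma inverse_derivative d F G DF DG :
  (forall z, has_deriv d F z (DF z)) -> (forall z, has_deriv d G z (DG z)) ->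
  (forall z, congZ d (F (G z)) z) ->
  forall y w i, (i < d)%nat -> mapp d (DF (G y)) (mapp d (DG y) w) i = w i.
Proof.
  intros HF HG HFG y.
  apply (near_identity_homogeneous d (fun w => mapp d (DF (G y)) (mapp d (DG y) w))).
  - intros t w i Hi. rewrite <- mapp_scale. apply mapp_ext. intros j _. apply mapp_scale.
  - apply (inverse_derivative_near_identity d F G _ _ y); auto.
Qed.

Lemma Dfk_ext d F G DF x n u v :
  veq d u v -> veq d (Dfk d F G DF x n u) (Dfk d F G DF x n v).
Proof.
  intros H. induction n; simpl; auto.
  intros i Hi. apply mapp_ext. exact IHn.
Qed.

Lemma Dfk_add d F G DF x n u v i :
  Dfk d F G DF x n (vadd u v) i = Dfk d F G DF x n u i + Dfk d F G DF x n v i.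
Proof.
  revert i. induction n; intros i; simpl; [reflexivity|].
  rewrite <- mapp_add. apply mapp_ext. intros j _. apply IHn.
Qed.

Lemma Dfk_scale d F G DF x n a u i :
  Dfk d F G DF x n (vscale a u) i = a * Dfk d F G DF x n u i.
Proof.
  revert i. induction n; intros i; simpl; [reflexivity|].
  rewrite <- mapp_scale. apply mapp_ext. intros j _. apply IHn.
Qed.

Lemma Dfk_zero d F G DF x n : veq d (Dfk d F G DF x n vzero) vzero.
Proof.
  induction n; intros i Hi; simpl; [reflexivity|].
  rewrite (mapp_ext _ _ _ vzero i IHn). apply mapp_zero.
Qed.

Lemma orb_neg_S F G x m : orb F G x (- Z.of_nat (S m))%Z = G (orb F G x (- Z.of_nat m))%Z.
Proof.
  destruct m; [reflexivity|].
  change (- Z.of_nat (S (S m)))%Z with (Zneg (Pos.of_succ_nat (S m))).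
  change (- Z.of_nat (S m))%Z with (Zneg (Pos.of_succ_nat m)).
  unfold orb. rewrite !SuccNat2Pos.id_succ. reflexivity.
Qed.

Section Splitting.
Variables (d : nat) (F G : vec -> vec) (DF DG : vec -> mat) (x : vec).

Let A (k : Z) : mat := DF (orb F G x k).

Definition backward_history (v : vec) (xi : nat -> vec) : Prop :=
  veq d v (mapp d (A (-1)%Z) (xi 0%nat)) /\
  forall n, veq d (xi n) (mapp d (A (- Z.of_nat (S (S n)))%Z) (xi (S n))).

Definition Es (v : vec) : Prop := subexp d (fun n => Dfk d F G DF x n v).

Definition Eu (v : vec) : Prop := exists xi, subexp d xi /\ backward_history v xi.

Lemma Es_subspace : is_subspace d Es.
Proof.
  unfold Es. split; [|split; [|split]].
  - eapply subexp_ext; [|apply subexp_zero]. intros n. apply Dfk_zero.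
  - intros u v Hu Hv. eapply subexp_ext; [|apply (subexp_add d _ _ Hu Hv)].
    intros n i _. apply Dfk_add.
  - intros a u Hu. eapply subexp_ext; [|apply (subexp_scale d a _ Hu)].
    intros n i _. apply Dfk_scale.
  - intros u v Huv Hu. eapply subexp_ext; [|exact Hu].
    intros n. apply Dfk_ext. intros i Hi. symmetry. auto.
Qed.

Lemma Eu_subspace : is_subspace d Eu.
Proof.
  unfold Eu, backward_history. split; [|split; [|split]].
  - exists (fun _ => vzero). split; [apply subexp_zero|].
    split; [|intros n]; intros i _; rewrite mapp_zero; reflexivity.
  - intros u v [x1 [T1 [A1 B1]]] [x2 [T2 [A2 B2]]].
    exists (fun n => vadd (x1 n) (x2 n)). split; [apply subexp_add; auto|].
    split; [|intros n]; intros i Hi; rewrite mapp_add; unfold vadd at 1.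
    + rewrite A1, A2 by auto. reflexivity.
    + rewrite B1, B2 by auto. reflexivity.
  - intros a u [x1 [T1 [A1 B1]]].
    exists (fun n => vscale a (x1 n)). split; [apply subexp_scale; auto|].
    split; [|intros n]; intros i Hi; rewrite mapp_scale; unfold vscale at 1.
    + rewrite A1 by auto. reflexivity.
    + rewrite B1 by auto. reflexivity.
  - intros u v Huv [x1 [T1 [A1 B1]]]. exists x1. repeat split; auto.
    intros i Hi. rewrite <- Huv by auto. apply A1; auto.
Qed.

Hypothesis Gamma_bij : Gamma_bijection_N d F G DF x.

Lemma Gamma_kernel_trivial (e : zseq) :
  inN d e -> (forall k, veq d (e k) (mapp d (A (k - 1)%Z) (e (k - 1)%Z))) ->
  forall k, veq d (e k) vzero.
Proof.
  intros He Hrec. destruct Gamma_bij as [_ [_ Hinj]].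
  apply Hinj; [exact He | |].
  - apply inN_zero.
  - intros k i Hi. unfold Gamma, vsub. rewrite mapp_zero, (Hrec k i Hi).
    unfold A, vzero. ring.
Qed.

Lemma Es_Eu_trivial v : Es v -> Eu v -> veq d v vzero.
Proof.
  intros Hs [xi [Hxi [H0 Hrec]]].
  set (e := glue (fun n => Dfk d F G DF x n v) xi).
  assert (He : inN d e) by (apply inN_glue; auto).
  assert (Hkernel : forall k, veq d (e k) (mapp d (A (k - 1)%Z) (e (k - 1)%Z))).
  { intros k. destruct (Z_cases k) as [[[|m] ->]|[n ->]].
    - replace (Z.of_nat 0 - 1)%Z with (- Z.of_nat 1)%Z by lia.
      unfold e. rewrite glue_nonneg, glue_neg. exact H0.
    - replace (Z.of_nat (S m) - 1)%Z with (Z.of_nat m) by lia.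
      unfold e. rewrite !glue_nonneg. intros i _. reflexivity.
    - replace (- Z.of_nat (S n) - 1)%Z with (- Z.of_nat (S (S n)))%Z by lia.
      unfold e. rewrite !glue_neg. apply Hrec. }
  pose proof (Gamma_kernel_trivial e He Hkernel (Z.of_nat 0)) as H.
  unfold e in H. rewrite glue_nonneg in H. exact H.
Qed.

(* Surjectivity of Gamma, applied to the sequence concentrated at time 0,
   decomposes every vector along E^u + E^s. *)
Lemma Eu_Es_span v : exists u s, Eu u /\ Es s /\ veq d v (vadd u s).
Proof.
  set (zeta := fun k : Z => if Z.eqb k 0 then v else vzero).
  assert (Hz : inN d zeta).
  { intros eps He. exists 1%nat. intros k Hk. unfold zeta.
    rewrite (proj2 (Z.eqb_neq k 0)) by lia. rewrite vnorm_vzero. left; apply exp_pos. }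
  assert (Hzeta0 : forall k, k <> 0%Z -> zeta k = vzero)
    by (intros k Hk; unfold zeta; rewrite (proj2 (Z.eqb_neq k 0)); auto).
  destruct (proj1 (proj2 Gamma_bij) zeta Hz) as [eta [HetaN Heq]].
  unfold Gamma, vsub in Heq.
  exists (vscale (-1) (mapp d (A (-1)%Z) (eta (-1)%Z))), (eta 0%Z). split; [|split].
  - exists (fun n => vscale (-1) (eta (- Z.of_nat (S n))%Z)).
    split; [apply subexp_scale, inN_backward; auto | split].
    + intros i Hi. rewrite mapp_scale. reflexivity.
    + intros n i Hi. rewrite mapp_scale. unfold vscale.
      specialize (Heq (- Z.of_nat (S n))%Z i Hi).
      rewrite Hzeta0 in Heq by lia. unfold vzero in Heq.
      replace (- Z.of_nat (S n) - 1)%Z with (- Z.of_nat (S (S n)))%Z in Heq by lia.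
      unfold A. lra.
  - unfold Es. eapply subexp_ext; [|apply (inN_forward d eta HetaN)].
    intros n. induction n; intros i Hi; [reflexivity|].
    specialize (Heq (Z.of_nat (S n)) i Hi). rewrite Hzeta0 in Heq by lia.
    unfold vzero in Heq.
    replace (Z.of_nat (S n) - 1)%Z with (Z.of_nat n) in Heq by lia.
    simpl Dfk. rewrite (mapp_ext _ _ _ _ _ IHn). lra.
  - intros i Hi. specialize (Heq 0%Z i Hi). unfold zeta in Heq.
    rewrite Z.eqb_refl in Heq. change (0 - 1)%Z with (-1)%Z in Heq.
    unfold vadd, vscale, A. lra.
Qed.

Lemma Eu_expands u : Eu u -> vnonzero d u -> pos_upper_exponent d (fun k => Dfk d F G DF x k u).
Proof.
  intros Hu [i [Hi Hne]]. apply NNPP. intros Hn.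
  apply Hne, (Es_Eu_trivial u (not_pos_exponent_subexp _ _ Hn) Hu i Hi).
Qed.

Hypothesis DF_DG_inverse :
  forall y w i, (i < d)%nat -> mapp d (DF (G y)) (mapp d (DG y) w) i = w i.

Lemma Dfmk_backward_history s : backward_history s (fun n => Dfmk d F G DG x (S n) s).
Proof.
  split.
  - intros i Hi. unfold A.
    change (s i = mapp d (DF (orb F G x (- Z.of_nat 1)%Z))
             (mapp d (DG (orb F G x (- Z.of_nat 0)%Z)) s) i).
    rewrite orb_neg_S, DF_DG_inverse by auto. reflexivity.
  - intros n i Hi. unfold A.
    change (Dfmk d F G DG x (S (S n)) s) with
      (mapp d (DG (orb F G x (- Z.of_nat (S n))%Z)) (Dfmk d F G DG x (S n) s)).
    rewrite orb_neg_S, DF_DG_inverse by auto. reflexivity.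
Qed.

Lemma Es_expands_backward s :
  Es s -> vnonzero d s -> pos_upper_exponent d (fun k => Dfmk d F G DG x k s).
Proof.
  intros Hs [i [Hi Hne]]. apply NNPP. intros Hn.
  assert (Hu : Eu s).
  { exists (fun n => Dfmk d F G DG x (S n) s). split.
    - apply (subexp_shift d (fun n => Dfmk d F G DG x n s)), not_pos_exponent_subexp, Hn.
    - apply Dfmk_backward_history. }
  apply Hne, (Es_Eu_trivial s Hs Hu i Hi).
Qed.

End Splitting.

Theorem lemma3p5 (d : nat) (F G : vec -> vec) (DF DG : vec -> mat) (x : vec) :
  C1_diffeo_torus d F G DF DG ->
  Gamma_bijection_N d F G DF x ->
  u_hyperbolic d F G DF DG x.
Proof.
  intros [_ [_ [[HdF _] [[HdG _] [_ HFG]]]]] Hbij.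
  pose proof (inverse_derivative d F G DF DG HdF HdG HFG) as Hinv.
  exists (Eu d F G DF x), (Es d F G DF x). split; [|split; [|split; [|split]]].
  - apply Eu_subspace.
  - apply Es_subspace.
  - apply Eu_Es_span; exact Hbij.
  - intros s. apply Es_expands_backward; assumption.
  - intros u. apply Eu_expands; assumption.
Qed.
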